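(* Let $e\ge4$ and let $Q$ be a convex polygon with $e-1$ vertices, one of which is marked as distinguished, the remaining vertices being numbered $2,3,\dots,e-1$ in cyclic order starting next to the distinguished vertex. To a triangulation $\mathcal T$ of $Q$ (a subdivision into triangles by non-crossing diagonals) associate the colouring of $\triangle_{2,e-1}$ in which a dot $(\delta,\varepsilon)$ is black if and only if the vertices $\delta$ and $\varepsilon$ are joined by a diagonal of $\mathcal T$. This assignment is a bijection between the set of triangulations of $Q$ and the set of sparse colourings of $\triangle_{2,e-1}$.
   Context: Dots are pairs of integers $(\alpha,\beta)$. For integers $\delta<\varepsilon$, the triangle $\triangle_{\delta,\varepsilon}$ is the set of dots $(\alpha,\beta)$ with $\delta\le\alpha$, $\beta\le\varepsilon$ and $\beta-\alpha\ge 2$. For a dot $(\alpha,\beta)\in\triangle_{\delta,\varepsilon}$, the sub-triangle $\triangle_{\alpha,\beta}$ is defined by the same rule. A coloured triangle $\triangle_{\delta,\varepsilon}$ is sparse if for every dot $(\alpha,\beta)\in\triangle_{\delta,\varepsilon}$ (including the vertex) the number of black dots in $\triangle_{\alpha,\beta}$ is at most $\beta-\alpha-1$, with equality if and only if $(\alpha,\beta)$ is black. *)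

From mathcomp Require Import all_boot.
Set Implicit Arguments. Unset Strict Implicit. Unset Printing Implicit Defensive.

Definition npair (e : nat) (p : 'I_e * 'I_e) : nat * nat := (val p.1, val p.2).

Definition tri (e d f : nat) : {set 'I_e * 'I_e} :=
  [set p | [&& d <= val p.1, val p.2 <= f & (val p.1).+2 <= val p.2]].

(* A colouring is given by its set C of black dots. *)
Definition sparse (e d f : nat) (C : {set 'I_e * 'I_e}) : Prop :=
  forall p : 'I_e * 'I_e, p \in tri e d f ->
    #|C :&: tri e (val p.1) (val p.2)| <= val p.2 - val p.1 - 1 /\
    (#|C :&: tri e (val p.1) (val p.2)| = val p.2 - val p.1 - 1 <-> p \in C).

(* Convex polygon with vertices 1, 2, ..., n in cyclic order (vertex 1 the
   distinguished one).  A diagonal is an ordered pair (a,b), a<b, of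
   non-adjacent vertices. *)
Definition is_diag (n : nat) (p : nat * nat) : bool :=
  [&& 1 <= p.1, p.1.+2 <= p.2, p.2 <= n & ~~ ((p.1 == 1) && (p.2 == n))].

(* Two diagonals of a convex polygon cross (in their interiors) iff their
   endpoints interleave. *)
Definition crossing (p q : nat * nat) : bool :=
  [&& p.1 < q.1, q.1 < p.2 & p.2 < q.2] || [&& q.1 < p.1, p.1 < q.2 & q.2 < p.2].

Definition triangulation (e n : nat) (T : {set 'I_e * 'I_e}) : Prop :=
  [/\ forall p, p \in T -> is_diag n (npair p),
      forall p q, p \in T -> q \in T -> ~~ crossing (npair p) (npair q)
    & forall p, is_diag n (npair p) -> p \notin T ->
        exists2 q, q \in T & crossing (npair p) (npair q)].

Definition colouring (e : nat) (T : {set 'I_e * 'I_e}) : {set 'I_e * 'I_e} :=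
  T :&: tri e 2 (e - 1).

From mathcomp Require Import all_boot zify.

Set Implicit Arguments. Unset Strict Implicit. Unset Printing Implicit Defensive.

(* The dots of the triangle with vertex (a,b) are the diagonals of the sub-polygon with
   vertices a..b.  Splitting a non-crossing set of dots at its apex c, the farthest vertex
   below b joined to a, separates it into the sub-triangles with vertices (a,c) and (c,b);
   by induction such a set has at most b-a-1 dots, and at most b-a-2 if (a,b) is not one
   of them.  In a triangulation the apex of a diagonal (a,b) is the third vertex of the
   triangle on it, so the bound is attained: this is sparseness.  Conversely, two crossing
   black dots of a sparse colouring would put too many black dots under the dot joining
   their outer ends, so black dots do not cross; adding the diagonals through vertex 1
   crossed by no black dot yields a triangulation, and every triangulation is recovered
   from its colouring in this way. *)

Section Triangulations.

Variable e : nat.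
Implicit Types (a b c d f : nat) (p q P Q : 'I_e * 'I_e) (C S T : {set 'I_e * 'I_e}).

Lemma in_tri a b p :
  (p \in tri e a b) = [&& a <= p.1, p.2 <= b & (p.1 : nat).+2 <= p.2].
Proof. by rewrite inE. Qed.

Lemma tri0 a b : b < a.+2 -> tri e a b = set0.
Proof. by move=> ba; apply/setP => p; rewrite in_tri inE; apply/negbTE; lia. Qed.

Lemma subset_tri a b a' b' : a <= a' -> b' <= b -> tri e a' b' \subset tri e a b.
Proof. by move=> aa' b'b; apply/subsetP => p; rewrite !in_tri; lia. Qed.

Lemma crossingC x y : crossing x y = crossing y x.
Proof. by rewrite /crossing orbC. Qed.

Lemma npair_inj : injective (@npair e).
Proof. by move=> [x1 y1] [x2 y2] [/val_inj-> /val_inj->]. Qed.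

Lemma npair_notin S p q : p \notin S -> q \in S -> npair q != npair p.
Proof. by move=> pS qS; apply: contraNneq pS => /npair_inj <-. Qed.

Definition noncrossing S :=
  forall p q, p \in S -> q \in S -> ~~ crossing (npair p) (npair q).

Lemma noncrossingS S S' : S' \subset S -> noncrossing S -> noncrossing S'.
Proof. by move=> /subsetP sS ncS p q /sS pS /sS qS; apply: ncS. Qed.

Definition apex S a b : nat :=
  maxn a.+1 (\max_(q | [&& q \in S, (q.1 : nat) == a & q.2 < b]) q.2).

Lemma apex_gt S a b : a < apex S a b.
Proof. exact: leq_maxl. Qed.

Lemma apex_lt S a b : a.+1 < b -> apex S a b < b.
Proof.
case: b => // b ab; rewrite gtn_max ab ltnS.
by apply/bigmax_leqP => q /and3P [_ _]; rewrite ltnS.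
Qed.

Lemma leq_apex S a b q : q \in S -> q.1 = a :> nat -> q.2 < b -> q.2 <= apex S a b.
Proof.
move=> qS q1 q2; apply: leq_trans (leq_maxr _ _).
by apply: leq_bigmax_cond; rewrite qS q1 eqxx q2.
Qed.

Lemma apex_spec S a b :
  apex S a b = a.+1 \/ exists2 q, q \in S & npair q = (a, apex S a b).
Proof.
rewrite /apex; case: (pickP (fun q => [&& q \in S, (q.1 : nat) == a & q.2 < b])).
  move=> q0 Pq0; rewrite (bigmax_eq_arg q0 Pq0).
  case: arg_maxnP => // qm /and3P [qmS /eqP qm1 _] _.
  by have [_ | _] := leqP qm.2 a.+1; [left | right; exists qm; rewrite // /npair /= qm1].
by move=> P0; left; rewrite big_pred0 ?maxn0.
Qed.

Lemma noncrossing_apex S a b q : noncrossing S -> q \in S ->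
  a < q.1 < apex S a b -> q.2 <= apex S a b.
Proof.
move=> ncS qS; case: (apex_spec S a b) => [-> | [q0 q0S q0E]]; first lia.
by move: (ncS _ _ q0S qS); rewrite q0E /crossing /npair /=; lia.
Qed.

Lemma noncrossing_tri_split S a b : S \subset tri e a b -> noncrossing S ->
    (forall q, q \in S -> npair q != (a, b)) ->
  S \subset tri e a (apex S a b) :|: tri e (apex S a b) b.
Proof.
move=> /subsetP sS ncS nbase; apply/subsetP => q qS; rewrite in_setU !in_tri.
have := sS q qS; have := nbase q qS; rewrite in_tri /npair xpair_eqE /= => nqab.
have := @leq_apex S a b q qS; have := @noncrossing_apex S a b q ncS qS; lia.
Qed.

Lemma card_base_free_of_narrower a b S :
    (forall a' b' S', b' - a' < b - a -> S' \subset tri e a' b' ->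
       noncrossing S' -> #|S'| <= b' - a' - 1) ->
    S \subset tri e a b -> noncrossing S ->
    (forall q, q \in S -> npair q != (a, b)) ->
  #|S| <= b - a - 2.
Proof.
move=> narrower sS ncS nbase.
have [ba | ab] := ltnP b a.+2.
  by move: sS; rewrite tri0 // subset0 => /eqP ->; rewrite cards0.
set c := apex S a b; have ac : a < c := apex_gt S a b; have cb : c < b := apex_lt S ab.
have split : S \subset S :&: tri e a c :|: S :&: tri e c b.
  by rewrite -setIUr subsetI subxx noncrossing_tri_split.
have ncI X : noncrossing (S :&: X) := noncrossingS (subsetIl S X) ncS.
have left := narrower a c _ ltac:(lia) (subsetIr S _) (ncI _).
have right := narrower c b _ ltac:(lia) (subsetIr S _) (ncI _).
have := leq_trans (subset_leq_card split) (leq_card_setU _ _); lia.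
Qed.

Lemma card_noncrossing_tri a b S : S \subset tri e a b -> noncrossing S ->
  #|S| <= b - a - 1.
Proof.
move: {2}(b - a) (erefl (b - a)) => w.
elim/ltn_ind: w a b S => w IH a b S wE sS ncS; subst w.
have narrower a' b' S' (lt : b' - a' < b - a) := IH _ lt a' b' S' erefl.
have [ba | ab] := ltnP b a.+2.
  by move: sS; rewrite tri0 // subset0 => /eqP ->; rewrite cards0.
case: (boolP [exists p in S, npair p == (a, b)]) => [|/exists_inPn nbase].
  case/exists_inP => p pS /eqP pE.
  rewrite (cardsD1 p) pS; suff : #|S :\ p| <= b - a - 2 by lia.
  apply: (card_base_free_of_narrower narrower).
  - exact: subset_trans (subsetDl S _) sS.
  - exact: noncrossingS (subsetDl S _) ncS.
  - by move=> q qSp; rewrite -pE; apply: npair_notin qSp; rewrite setD11.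
by have := card_base_free_of_narrower narrower sS ncS nbase; lia.
Qed.

Lemma card_noncrossing_tri_base_free a b S : S \subset tri e a b -> noncrossing S ->
  (forall q, q \in S -> npair q != (a, b)) -> #|S| <= b - a - 2.
Proof.
move=> sS ncS nbase; apply: card_base_free_of_narrower sS ncS nbase => a' b' S' _.
exact: card_noncrossing_tri.
Qed.

Lemma card_tri_split C p c : p \in C -> p.1 < c -> c < p.2 ->
  #|C :&: tri e p.1 c| + #|C :&: tri e c p.2| < #|C :&: tri e p.1 p.2|.
Proof.
move=> pC ac cb; set A := C :&: tri e p.1 c; set B := C :&: tri e c p.2.
have AB0 : A :&: B = set0.
  by apply/setP => q; rewrite !inE; case: (q \in C) => //=; apply/negbTE; lia.
have pAB : p \notin A :|: B by rewrite !inE pC /=; lia.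
have sub : p |: (A :|: B) \subset C :&: tri e p.1 p.2.
  rewrite subUset sub1set !inE pC /=; apply/andP; split; first lia.
  by rewrite subUset; apply/andP; split; apply/setIS/subset_tri; lia.
by have := subset_leq_card sub; rewrite cardsU1 pAB -cardsUI AB0 cards0 addn0.
Qed.

Section Triangulation.

Variables (N : nat) (T : {set 'I_e * 'I_e}).
Hypothesis Ttri : triangulation N T.

Lemma apex_triangulation p : p \in T ->
  p.2 = (apex T p.1 p.2).+1 :> nat \/
  exists2 q, q \in T & npair q = (apex T p.1 p.2, p.2 : nat).
Proof.
case: Ttri => Tdiag ncT maxT pT; set c := apex T p.1 p.2.
have := Tdiag p pT; rewrite /is_diag /npair /= => pdiag.
have ac : p.1 < c := apex_gt T p.1 p.2; have cb : c < p.2 by apply: apex_lt; lia.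
have [->|cp] := eqVneq (p.2 : nat) c.+1; [by left | right].
have ce : c < e := ltn_trans cb (ltn_ord p.2).
pose r : 'I_e * 'I_e := (Ordinal ce, p.2).
case rT: (r \in T); first by exists r.
have rdiag : is_diag N (npair r) by rewrite /is_diag /npair /=; lia.
have [q qT] := maxT r rdiag (negbT rT); have := ncT p q pT qT; have := Tdiag q qT.
have := @leq_apex T p.1 p.2 q qT; have := @noncrossing_apex T p.1 p.2 q ncT qT.
by rewrite /is_diag /crossing /npair /= -/c; lia.
Qed.

Lemma card_triangulation_tri p : p \in T -> p.2 - p.1 - 1 <= #|T :&: tri e p.1 p.2|.
Proof.
move: {2}(p.2 - p.1) (erefl (p.2 - p.1)) => w.
elim/ltn_ind: w p => w IH p wE pT; subst w.
have [Tdiag _ _] := Ttri; have := Tdiag p pT; rewrite /is_diag /npair /= => pdiag.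
set c := apex T p.1 p.2.
have ac : p.1 < c := apex_gt T p.1 p.2; have cb : c < p.2 by apply: apex_lt; lia.
have side a b : a < b -> b - a < p.2 - p.1 ->
    b = a.+1 \/ (exists2 q, q \in T & npair q = (a, b)) -> b - a - 1 <= #|T :&: tri e a b|.
  move=> ab narrower [-> | [q qT [qa qb]]]; first lia.
  by rewrite -qa -qb in narrower *; apply: IH _ narrower q erefl qT.
have := side _ _ ac ltac:(lia) (apex_spec T p.1 p.2).
have := side _ _ cb ltac:(lia) (apex_triangulation pT).
by have := card_tri_split pT ac cb => /=; lia.
Qed.

End Triangulation.

Lemma sparse_triangulation N T d f : triangulation N T -> sparse d f (T :&: tri e d f).
Proof.
move=> Ttri p pdf; have ncT : noncrossing T by case: Ttri.
have -> : T :&: tri e d f :&: tri e p.1 p.2 = T :&: tri e p.1 p.2.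
  by rewrite -setIA (setIidPr (subset_tri _ _)) //; move: pdf; rewrite in_tri; lia.
have ub := card_noncrossing_tri (subsetIr T _) (noncrossingS (subsetIl T _) ncT).
rewrite in_setI pdf andbT; split=> //; split=> [black | pT]; last first.
  by apply/eqP; rewrite eqn_leq ub (card_triangulation_tri Ttri).
apply/idPn => npT; move: pdf black; rewrite in_tri.
have := card_noncrossing_tri_base_free (subsetIr T _) (noncrossingS (subsetIl T _) ncT)
  (fun q qTp => npair_notin npT (subsetP (subsetIl _ _) q qTp)) => /=; lia.
Qed.

Section Sparse.

Variables (d f : nat) (C : {set 'I_e * 'I_e}).
Hypotheses (sC : C \subset tri e d f) (sp : sparse d f C).

Lemma sparse_card_black p : p \in C -> #|C :&: tri e p.1 p.2| = p.2 - p.1 - 1.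
Proof. by move=> pC; have [_ black] := sp (subsetP sC p pC); apply/black. Qed.

Lemma sparse_card_le (x y : 'I_e) : d <= x -> y <= f -> #|C :&: tri e x y| <= y - x - 1.
Proof.
move=> dx yf; have [yx | xy] := ltnP y x.+2; first by rewrite tri0 // setI0 cards0.
have : ((x, y) : 'I_e * 'I_e) \in tri e d f by rewrite in_tri /=; lia.
by case/sp.
Qed.

Lemma sparse_card_open p : p \in tri e d f ->
  #|(C :&: tri e p.1 p.2) :\ p| <= p.2 - p.1 - 2.
Proof.
move=> pdf; have pp : p \in tri e p.1 p.2 by move: pdf; rewrite !in_tri; lia.
have [ub black] := sp pdf; move: ub black => /=.
rewrite (cardsD1 p (C :&: _)) in_setI pp andbT; set n := #|_ :\ p|.
case: (p \in C) => /= ub [black white]; first by have := white isT; lia.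
suff : n <> p.2 - p.1 - 1 by lia.
by move/black.
Qed.

Lemma sparse_noncrossing : noncrossing C.
Proof.
suff no_cross P Q : P \in C -> Q \in C -> ~~ [&& P.1 < Q.1, Q.1 < P.2 & P.2 < Q.2].
  by move=> P Q PC QC; rewrite /crossing /npair /= negb_or !no_cross.
move=> PC QC; apply/negP => /and3P [PQ QP PQ2].
have := subsetP sC P PC; have := subsetP sC Q QC; rewrite !in_tri => Qdf Pdf.
pose D : 'I_e * 'I_e := (P.1, Q.2).
have Ddf : D \in tri e d f by rewrite in_tri /D /=; lia.
set A := C :&: tri e P.1 P.2; set B := C :&: tri e Q.1 Q.2.
(* The black dots under P and under Q lie under D but differ from D, and those under both
   lie under (Q.1, P.2): this leaves too few places under D. *)
have AB_D : A :|: B \subset (C :&: tri e D.1 D.2) :\ D.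
  apply/subsetP => q; rewrite !inE /D /= => /orP [] /andP [-> qtri];
    rewrite -(inj_eq npair_inj) /npair xpair_eqE /=; lia.
have AB_QP : A :&: B \subset C :&: tri e Q.1 P.2.
  by apply/subsetP => q; rewrite !inE; case: (q \in C) => //=; lia.
have := subset_leq_card AB_D; have := subset_leq_card AB_QP; have := cardsUI A B.
have := sparse_card_open Ddf.
have := sparse_card_le (x := Q.1) (y := P.2) ltac:(lia) ltac:(lia).
rewrite !sparse_card_black //=; lia.
Qed.

Lemma sparse_enclosed p Q : Q \in C -> p \in tri e Q.1 Q.2 ->
  (forall q, q \in C -> ~~ crossing (npair p) (npair q)) -> p \in C.
Proof.
move=> QC pQ pnc; apply/idPn => npC.
set S := p |: (C :&: tri e Q.1 Q.2).
have sS : S \subset tri e Q.1 Q.2 by rewrite subUset sub1set pQ subsetIr.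
have ncS : noncrossing S.
  move=> x y /setU1P [-> | /setIP [xC _]] /setU1P [-> | /setIP [yC _]].
  - by rewrite /crossing; lia.
  - exact: pnc.
  - by rewrite crossingC; apply: pnc.
  - exact: sparse_noncrossing.
have := card_noncrossing_tri sS ncS.
by rewrite cardsU1 in_setI (negbTE npC) sparse_card_black //=; lia.
Qed.

End Sparse.

(* Vertex 1 is the distinguished vertex: the colouring forgets the diagonals through it. *)
Definition fan C : {set 'I_e * 'I_e} :=
  [set p : 'I_e * 'I_e | [&& (p.1 : nat) == 1, is_diag (e - 1) (npair p)
             & [forall q in C, ~~ crossing (npair p) (npair q)]]].

Lemma mem_triangulation T p : triangulation (e - 1) T ->
  (p \in T) = (p \in colouring T :|: fan (colouring T)).
Proof.
case=> Tdiag ncT maxT; rewrite /colouring in_setU in_setI [p \in fan _]in_set.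
apply/idP/idP => [pT | /orP [/andP [] // | /and3P [/eqP p1 pd /forall_inP pnc]]].
  have := Tdiag p pT; rewrite /is_diag /npair /= => pdiag.
  have [p1 | p1] := eqVneq (p.1 : nat) 1; last by rewrite pT in_tri; lia.
  rewrite p1 /=; apply/orP; right; apply/andP; split.
    by move: pdiag; rewrite p1; lia.
  by apply/forall_inP => q /setIP [qT _]; have := ncT p q pT qT; rewrite /npair /= p1.
apply/idPn => npT; have [q qT pq] := maxT p pd npT.
have := pnc q; rewrite in_setI qT in_tri; move: pq (Tdiag q qT).
by rewrite /is_diag /crossing /npair /= p1; lia.
Qed.

Lemma triangulationE T : triangulation (e - 1) T -> T = colouring T :|: fan (colouring T).
Proof. by move=> Ttri; apply/setP => p; rewrite mem_triangulation. Qed.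

Section Fan.

Variable C : {set 'I_e * 'I_e}.
Hypotheses (sC : C \subset tri e 2 (e - 1)) (sp : sparse 2 (e - 1) C).

Lemma colouring_fan : colouring (C :|: fan C) = C.
Proof.
rewrite /colouring setIUl (setIidPl sC); apply/setUidPl/subsetP => p.
by rewrite in_setI in_tri inE => /andP [/and3P [/eqP p1 _ _]]; lia.
Qed.

Lemma fan_maximal p : is_diag (e - 1) (npair p) -> p \notin C :|: fan C ->
  exists2 q, q \in C :|: fan C & crossing (npair p) (npair q).
Proof.
move=> pd; rewrite in_setU negb_or => /andP [npC npF]; apply/exists_inP.
apply: contraNT npF => /exists_inPn pnc.
have pncC q : q \in C -> ~~ crossing (npair p) (npair q).
  by move=> qC; apply: pnc; rewrite inE qC.
rewrite inE pd /=; move: pd; rewrite /is_diag /npair /= => pd.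
have [p1 | p1] := eqVneq (p.1 : nat) 1.
  by rewrite p1 /=; apply/forall_inP => q /pncC; rewrite /npair /= p1.
exfalso; have ptri : p \in tri e 2 (e - 1) by rewrite in_tri; lia.
have enclosed Q : Q \in C -> ~~ ((Q.1 <= p.1) && (p.2 <= Q.2)).
  move=> QC; apply/negP => /andP [Qp pQ]; move/negP: npC; apply.
  by apply: (sparse_enclosed sC sp QC) => //; rewrite in_tri; lia.
set S := C :&: tri e p.1 p.2; set c := apex S p.1 p.2.
have ac : p.1 < c := apex_gt S p.1 p.2; have cb : c < p.2 by apply: apex_lt; lia.
have ncS : noncrossing S := noncrossingS (subsetIl C _) (sparse_noncrossing sC sp).
have Ssplit := @noncrossing_tri_split S p.1 p.2 (subsetIr C _) ncS
  (fun q => npair_notin (contra (subsetP (subsetIl C _) p) npC)).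
(* The diagonal from 1 to the apex of the black dots under p crosses p, but no black dot. *)
have ce : c < e := ltn_trans cb (ltn_ord p.2); have e1 : 1 < e by lia.
pose r : 'I_e * 'I_e := (Ordinal e1, Ordinal ce).
have : r \in fan C.
  rewrite inE /r /is_diag /npair /=; apply/andP; split; first lia.
  apply/forall_inP => q qC.
  have := subsetP sC q qC; rewrite in_tri /crossing /npair /= => qtri.
  have [qS | nqS] := boolP (q \in S).
    by have := subsetP Ssplit q qS; rewrite in_setU !in_tri -/c; lia.
  by move: nqS (pncC q qC) (enclosed q qC); rewrite inE qC in_tri /crossing /npair /=; lia.
by move=> rF; have := pnc r; rewrite in_setU rF orbT /crossing /npair /= => /(_ isT); lia.
Qed.

Lemma triangulation_fan : triangulation (e - 1) (C :|: fan C).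
Proof.
have ncC := sparse_noncrossing sC sp.
have fanP p q : p \in fan C -> q \in C -> ~~ crossing (npair p) (npair q).
  by rewrite inE => /and3P [_ _ /forall_inP]; apply.
split; last exact: fan_maximal.
  move=> p /setUP [/(subsetP sC) | ]; last by rewrite inE => /and3P [].
  by rewrite in_tri /is_diag /npair /=; lia.
move=> p q /setUP [pC | pF] /setUP [qC | qF].
- exact: ncC.
- by rewrite crossingC; apply: fanP.
- exact: fanP.
by move: pF qF; rewrite !inE /crossing /npair /= => /and3P [/eqP-> _ _] /and3P [/eqP-> _ _].
Qed.

End Fan.

End Triangulations.

Theorem mainTheorem3 (e : nat) (he : 4 <= e) :
  [/\ (forall T : {set 'I_e * 'I_e}, triangulation (e - 1) T ->
         colouring T \subset tri e 2 (e - 1) /\ sparse 2 (e - 1) (colouring T)),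
      (forall T1 T2 : {set 'I_e * 'I_e},
         triangulation (e - 1) T1 -> triangulation (e - 1) T2 ->
         colouring T1 = colouring T2 -> T1 = T2)
    & (forall C : {set 'I_e * 'I_e},
         C \subset tri e 2 (e - 1) -> sparse 2 (e - 1) C ->
         exists2 T, triangulation (e - 1) T & colouring T = C)].
Proof.
split.
- by move=> T Ttri; split; [exact: subsetIr | exact: sparse_triangulation Ttri].
- move=> T1 T2 T1tri T2tri eqC.
  by rewrite (triangulationE T1tri) (triangulationE T2tri) eqC.
- move=> C sC sp; exists (C :|: fan C).
  + exact: triangulation_fan.
  + exact: colouring_fan.
Qed.
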